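(* Let the EC fluctuations $\mathbf{D}^\pm_{EC}$ satisfy conditions (C1)–(C5) below, and consider the flux differencing nonconservative DGSEM $$\omega_i\frac{\Delta x_k}{2}\dot{\mathbf{U}}^k_i+\omega_i\sum_{m=0}^N 2\mathcal{D}_{im}\mathbf{D}^-_{EC}(\mathbf{U}^k_i,\mathbf{U}^k_m)+\delta_{i0}\mathbf{D}^+_{EC}(\mathbf{U}^{k-1}_N,\mathbf{U}^k_0)+\delta_{iN}\mathbf{D}^-_{EC}(\mathbf{U}^k_N,\mathbf{U}^{k+1}_0)=0,\quad i=0,\dots,N,$$ on an element $\Omega^k$ with neighbors $\Omega^{k-1},\Omega^{k+1}$. Assume the semidiscrete solution is differentiable in time so that $\mathbf{w}(\mathbf{U}_i^k)^T\dot{\mathbf{U}}_i^k=\frac{d}{dt}S(\mathbf{U}_i^k)$. Then $$\sum_{i=0}^N\omega_i\frac{\Delta x_k}{2}\frac{d S(\mathbf{U}^k_i)}{dt}=\mathcal{F}(\mathbf{U}^{k-1}_N,\mathbf{U}^k_0)-\mathcal{F}(\mathbf{U}^k_N,\mathbf{U}^{k+1}_0),$$ where the numerical entropy flux $\mathcal{F}(\mathbf{u}_L,\mathbf{u}_R):=q(\mathbf{u}_L)+\mathbf{w}(\mathbf{u}_L)^T\mathbf{D}^-_{EC}(\mathbf{u}_L,\mathbf{u}_R)=q(\mathbf{u}_R)-\mathbf{w}(\mathbf{u}_R)^T\mathbf{D}^+_{EC}(\mathbf{u}_L,\mathbf{u}_R)$ is consistent, $\mathcal{F}(\mathbf{u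},\mathbf{u})=q(\mathbf{u})$.
   Context: System: $\mathbf{u}_t+\mathbf{f}(\mathbf{u})_x+\mathbf{B}(\mathbf{u})\mathbf{u}_x=0$, $\mathbf{u}\in\mathcal{U}\subset\mathbb{R}^n$, generalized Jacobian $\mathbf{A}:=\mathbf{f}_{\mathbf{u}}+\mathbf{B}$. Entropy pair: a strictly convex $C^2$ function $S:\mathcal{U}\to\mathbb{R}$ and entropy flux $q:\mathcal{U}\to\mathbb{R}$ with $q_{\mathbf{u}}=\mathbf{w}^T(\mathbf{f}_{\mathbf{u}}+\mathbf{B})$, where $\mathbf{w}(\mathbf{u}):=S_{\mathbf{u}}(\mathbf{u})$ are the entropy variables. Write $\mathbf{w}_L=\mathbf{w}(\mathbf{u}_L)$, $q_L=q(\mathbf{u}_L)$, etc. A family of paths is a Lipschitz map $\Phi(s;\mathbf{u}_L,\mathbf{u}_R)\in\mathcal{U}$, $s\in[0,1]$, with $\Phi(0;\mathbf{u}_L,\mathbf{u}_R)=\mathbf{u}_L$, $\Phi(1;\mathbf{u}_L,\mathbf{u}_R)=\mathbf{u}_R$, $\Phi(s;\mathbf{u},\mathbf{u})=\mathbf{u}$. Fluctuations $\mathbf{D}^\pm:\mathcal{U}\times\mathcal{U}\to\mathbb{R}^n$ (Lipschitz) are called entropy conservative (EC), written $\mathbf{D}^\pm_{EC}$, if for all $\mathbf{u},\mathbf{u}_L,\mathbf{u}_R$: (C1) $\mathbf{D}^\pm(\mathbf{u},\mathbf{u})=0$; (C2) $\mathbf{D}^-(\mathbf{u}_L,\mathbf{u}_R)+\mathbf{D}^+(\mathbf{u}_L,\mathbf{u}_R)=\int_0^1\mathbf{A}(\Phi(s;\mathbf{u}_L,\mathbf{u}_R))\partial_s\Phi(s;\mathbf{u}_L,\mathbf{u}_R)\,ds$;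 (C3) $\mathbf{D}^-(\mathbf{u}_L,\mathbf{u}_R)+\mathbf{D}^+(\mathbf{u}_R,\mathbf{u}_L)=0$; (C4) $\mathbf{w}_L^T\mathbf{D}^-(\mathbf{u}_L,\mathbf{u}_R)+\mathbf{w}_R^T\mathbf{D}^+(\mathbf{u}_L,\mathbf{u}_R)=q_R-q_L$; (C5) $\frac{\partial\mathbf{D}^-(\mathbf{u}_L,\mathbf{u}_R)}{\partial\mathbf{u}_R}\big|_{\mathbf{u}_R=\mathbf{u}_L}=\frac12\mathbf{A}(\mathbf{u}_L)$. Discretization: the domain is split into elements $\Omega^k=[x_{k-1},x_k]$ of width $\Delta x_k$, each mapped affinely to $[-1,1]$. On each element the solution is a polynomial of degree $N$ with nodal values $\mathbf{U}^k_i\in\mathcal{U}$ at the LGL nodes $-1=\xi_0<\dots<\xi_N=1$ with LGL quadrature weights $\omega_i>0$; $\mathcal{D}_{ij}=l_j'(\xi_i)$ is the differentiation matrix of the Lagrange basis $l_j$ on these nodes. These operators satisfy the summation-by-parts property $\mathcal{Q}+\mathcal{Q}^T=\mathcal{B}$ with $\mathcal{Q}_{ij}=\omega_i\mathcal{D}_{ij}$ and $\mathcal{B}_{ij}=\delta_{iN}\delta_{jN}-\delta_{i0}\delta_{j0}$; also $\sum_j\mathcal{D}_{ij}=0$. $\delta$ denotes the Kronecker delta. *)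

From HB Require Import structures.
From mathcomp Require Import all_boot all_order all_algebra.
From mathcomp Require Import all_classical all_reals all_analysis.
Import Order.TTheory GRing.Theory Num.Theory.
Import numFieldNormedType.Exports.

Set Implicit Arguments.
Unset Strict Implicit.
Unset Printing Implicit Defensive.

Local Open Scope classical_set_scope.
Local Open Scope ring_scope.

Section Defs.
Variables (R : realType) (n : nat).

Definition dotv (a b : 'cV[R]_n) : R := \sum_(i < n) a i 0 * b i 0.

(* Action of the generalized Jacobian A(u) = f_u(u) + B(u) on a vector v. *)
Definition Aapp (f : 'cV[R]_n -> 'cV[R]_n) (B : 'cV[R]_n -> 'M[R]_n)
  (u v : 'cV[R]_n) : 'cV[R]_n := 'd f u v + B u *m v.

Definition strictly_convex_on (U : set 'cV[R]_n) (S : 'cV[R]_n -> R) : Prop :=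
  forall x y : 'cV[R]_n, U x -> U y -> x != y ->
  forall t : R, 0 < t < 1 -> U ((1 - t) *: x + t *: y) ->
  S ((1 - t) *: x + t *: y) < (1 - t) * S x + t * S y.

(* (S, q) is an entropy pair with entropy variables w = S_u:
   S strictly convex and C^2 on U (gradient w, which is C^1 on U),
   the flux f is differentiable on U, and q_u = w^T (f_u + B). *)
Definition entropy_pair (U : set 'cV[R]_n) (f : 'cV[R]_n -> 'cV[R]_n)
  (B : 'cV[R]_n -> 'M[R]_n) (S q : 'cV[R]_n -> R) (w : 'cV[R]_n -> 'cV[R]_n)
  : Prop :=
  [/\ strictly_convex_on U S,
      (forall u, U u -> differentiable S u /\
                        forall v, 'd S u v = dotv (w u) v),
      (forall u, U u -> differentiable w u),
      (forall v, {within U, continuous (fun u => 'd w u v)}) &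
      (forall u, U u -> differentiable f u)] /\
      (forall u, U u -> differentiable q u /\
                        forall v, 'd q u v = dotv (w u) (Aapp f B u v)).

Definition path_family (U : set 'cV[R]_n)
  (Phi : R -> 'cV[R]_n -> 'cV[R]_n -> 'cV[R]_n) : Prop :=
  [/\ (forall s uL uR, 0 <= s <= 1 -> U uL -> U uR -> U (Phi s uL uR)),
      (forall uL uR, U uL -> U uR -> Phi 0 uL uR = uL),
      (forall uL uR, U uL -> U uR -> Phi 1 uL uR = uR),
      (forall s u, 0 <= s <= 1 -> U u -> Phi s u u = u) &
      (exists L : R, forall s s' uL uL' uR uR',
          0 <= s <= 1 -> 0 <= s' <= 1 -> U uL -> U uL' -> U uR -> U uR' ->
          `|Phi s uL uR - Phi s' uL' uR'|
            <= L * (`|s - s'| + `|uL - uL'| + `|uR - uR'|))].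

Definition lipschitz2_on (U : set 'cV[R]_n)
  (D : 'cV[R]_n -> 'cV[R]_n -> 'cV[R]_n) : Prop :=
  exists L : R, forall uL uL' uR uR', U uL -> U uL' -> U uR -> U uR' ->
    `|D uL uR - D uL' uR'| <= L * (`|uL - uL'| + `|uR - uR'|).

Definition EC_fluctuations (U : set 'cV[R]_n) (f : 'cV[R]_n -> 'cV[R]_n)
  (B : 'cV[R]_n -> 'M[R]_n) (q : 'cV[R]_n -> R) (w : 'cV[R]_n -> 'cV[R]_n)
  (Phi : R -> 'cV[R]_n -> 'cV[R]_n -> 'cV[R]_n)
  (Dm Dp : 'cV[R]_n -> 'cV[R]_n -> 'cV[R]_n) : Prop :=
  lipschitz2_on U Dm /\ lipschitz2_on U Dp /\
  [/\
      (forall u, U u -> Dm u u = 0 /\ Dp u u = 0),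
      (forall uL uR, U uL -> U uR ->
         Dm uL uR + Dp uL uR =
         \col_(j < n) (\int[lebesgue_measure]_(s in `[0%R, 1%R])
              (Aapp f B (Phi s uL uR) (derive1 (fun s' => Phi s' uL uR) s)) j 0)),
      (forall uL uR, U uL -> U uR -> Dm uL uR + Dp uR uL = 0),
      (forall uL uR, U uL -> U uR ->
         dotv (w uL) (Dm uL uR) + dotv (w uR) (Dp uL uR) = q uR - q uL) &
      (forall uL, U uL -> differentiable (Dm uL) uL /\
         forall v, 'd (Dm uL) uL v = 2^-1 *: Aapp f B uL v)].

Definition numflux (q : 'cV[R]_n -> R) (w : 'cV[R]_n -> 'cV[R]_n)
  (Dm : 'cV[R]_n -> 'cV[R]_n -> 'cV[R]_n) (uL uR : 'cV[R]_n) : R :=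
  q uL + dotv (w uL) (Dm uL uR).

End Defs.

Section LGL.
Variable R : realType.

(* Legendre polynomials via Bonnet's recurrence: legP k = (P_k, P_(k+1)). *)
Fixpoint legP (k : nat) : {poly R} * {poly R} :=
  match k with
  | 0 => (1, 'X)
  | k'.+1 => let: (p, p1) := legP k' in
      (p1, ((2 * k'.+1 + 1)%:R / (k'.+2)%:R) *: ('X * p1)
           - ((k'.+1)%:R / (k'.+2)%:R) *: p)
  end.

Definition legendre (k : nat) : {poly R} := (legP k).1.

Definition is_LGL (N : nat) (xi omega : 'I_N.+1 -> R) : Prop :=
  [/\ (forall i j : 'I_N.+1, (i < j)%N -> xi i < xi j),
      xi ord0 = -1, xi ord_max = 1,
      (forall i : 'I_N.+1, (0 < i < N)%N -> root (deriv (legendre N)) (xi i)) &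
      (forall i : 'I_N.+1,
         omega i = 2 / (N%:R * N.+1%:R * ((legendre N).[xi i]) ^+ 2))].

Definition lagrange (N : nat) (xi : 'I_N.+1 -> R) (j : 'I_N.+1) : {poly R} :=
  \prod_(m < N.+1 | m != j) (('X - (xi m)%:P) * ((xi j - xi m)^-1)%:P).

Definition Dmat (N : nat) (xi : 'I_N.+1 -> R) (i j : 'I_N.+1) : R :=
  (deriv (lagrange xi j)).[xi i].

(* Summation-by-parts: Q + Q^T = B with Q_ij = omega_i D_ij. *)
Definition SBP (N : nat) (xi omega : 'I_N.+1 -> R) : Prop :=
  forall i j : 'I_N.+1,
    omega i * Dmat xi i j + omega j * Dmat xi j i =
    ((i == ord_max) && (j == ord_max))%:R - ((i == ord0) && (j == ord0))%:R.

End LGL.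

From HB Require Import structures.
From mathcomp Require Import all_boot all_order all_algebra.
From mathcomp Require Import all_classical all_reals all_analysis.
From mathcomp Require Import lra.
Import Order.TTheory GRing.Theory Num.Theory.
Import numFieldNormedType.Exports.

Set Implicit Arguments.
Unset Strict Implicit.
Unset Printing Implicit Defensive.
Local Open Scope classical_set_scope.
Local Open Scope ring_scope.

(* Dotting the scheme with the entropy variables turns the volume term into
   sum_i omega_i sum_m 2 D_im w_i^T D^-(U_i, U_m).  Since w_i^T D^-(U_i, U_m)
   = F(U_i, U_m) - q(U_i), the rows of D sum to zero, and F is symmetric by
   (C3)-(C4), the SBP property Q + Q^T = B collapses this double sum to
   F(U_N, U_N) - F(U_0, U_0) = q(U_N) - q(U_0).  The surface fluctuations then
   combine with these boundary values of q into the numerical entropy fluxes. *)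

Section DotLinear.
Variables (R : realType) (n : nat).
Implicit Types (a x y : 'cV[R]_n).

Lemma dotvD a x y : dotv a (x + y) = dotv a x + dotv a y.
Proof. by rewrite /dotv -big_split; apply: eq_bigr => i _; rewrite mxE mulrDr. Qed.

Lemma dotvZ a c x : dotv a (c *: x) = c * dotv a x.
Proof. by rewrite /dotv mulr_sumr; apply: eq_bigr => i _; rewrite mxE mulrCA. Qed.

Lemma dotv0 a : dotv a 0 = 0.
Proof. by rewrite /dotv big1 // => i _; rewrite mxE mulr0. Qed.

Lemma dotv_sum a (I : finType) (F : I -> 'cV[R]_n) :
  dotv a (\sum_i F i) = \sum_i dotv a (F i).
Proof.
by rewrite /dotv; under eq_bigr do rewrite summxE mulr_sumr; rewrite exchange_big.
Qed.

End DotLinear.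

Lemma sum_delta_diag (R : pzRingType) N (a : 'I_N.+1) (g : 'I_N.+1 -> 'I_N.+1 -> R) :
  \sum_i \sum_m ((i == a) && (m == a))%:R * g i m = g a a.
Proof.
rewrite (bigD1 a) //= [X in _ + X]big1 => [|i /negbTE ia]; last first.
  by apply: big1 => m _; rewrite ia mul0r.
rewrite addr0 (bigD1 a) //= eqxx mul1r big1 ?addr0 // => m /negbTE ->.
by rewrite mul0r.
Qed.

Lemma sum_delta (R : pzRingType) N (a : 'I_N.+1) (c : R) :
  \sum_(i < N.+1) (i == a)%:R * c = c.
Proof.
rewrite (bigD1 a) //= eqxx mul1r big1 ?addr0 // => i /negbTE ->.
by rewrite mul0r.
Qed.

(* Discrete analogue of integrating a derivative: against a symmetric
   two-point quantity only the boundary part of Q + Q^T survives. *)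
Lemma SBP_sum_sym (R : pzRingType) N (Q g : 'I_N.+1 -> 'I_N.+1 -> R) :
  (forall i m, Q i m + Q m i =
     ((i == ord_max) && (m == ord_max))%:R - ((i == ord0) && (m == ord0))%:R) ->
  (forall i m, g i m = g m i) ->
  (\sum_i \sum_m Q i m * g i m) *+ 2 = g ord_max ord_max - g ord0 ord0.
Proof.
move=> SBPQ gC.
have QTg : \sum_i \sum_m Q i m * g i m = \sum_i \sum_m Q m i * g i m.
  by rewrite exchange_big; apply: eq_bigr => i _; apply: eq_bigr => m _; rewrite gC.
rewrite mulr2n {2}QTg -!sum_delta_diag -sumrB -big_split; apply: eq_bigr => i _.
by rewrite -sumrB -big_split; apply: eq_bigr => m _; rewrite -mulrBl -SBPQ mulrDl.
Qed.

Section EntropyFlux.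
Variables (R : realType) (n : nat) (U : set 'cV[R]_n).
Variables (q : 'cV[R]_n -> R) (w : 'cV[R]_n -> 'cV[R]_n).
Variables (Dm Dp : 'cV[R]_n -> 'cV[R]_n -> 'cV[R]_n).
Hypothesis Dm_diag : forall u, U u -> Dm u u = 0.
Hypothesis DmDp_skew : forall uL uR, U uL -> U uR -> Dm uL uR + Dp uR uL = 0.
Hypothesis DmDp_entropy : forall uL uR, U uL -> U uR ->
  dotv (w uL) (Dm uL uR) + dotv (w uR) (Dp uL uR) = q uR - q uL.

Let F := numflux q w Dm.

Lemma numfluxE uL uR : U uL -> U uR -> F uL uR = q uR - dotv (w uR) (Dp uL uR).
Proof. by move=> UL UR; rewrite /F /numflux; have := DmDp_entropy UL UR; lra. Qed.

Lemma numflux_diag u : U u -> F u u = q u.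
Proof. by move=> Uu; rewrite /F /numflux Dm_diag // dotv0 addr0. Qed.

Lemma numfluxC uL uR : U uL -> U uR -> F uL uR = F uR uL.
Proof.
move=> UL UR; rewrite numfluxE // /F /numflux.
have /(congr1 (dotv (w uR))) := DmDp_skew UR UL.
by rewrite dotvD dotv0; lra.
Qed.

Lemma flux_differencing_entropy N (xi omega : 'I_N.+1 -> R) (u : 'I_N.+1 -> 'cV[R]_n) :
  SBP xi omega -> (forall i, \sum_(j < N.+1) Dmat xi i j = 0) -> (forall i, U (u i)) ->
  \sum_i omega i * \sum_m (2 * Dmat xi i m) * dotv (w (u i)) (Dm (u i) (u m))
    = q (u ord_max) - q (u ord0).
Proof.
move=> SBPxi Drow Uu.
have volumeE i : omega i * \sum_m (2 * Dmat xi i m) * dotv (w (u i)) (Dm (u i) (u m))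
    = (\sum_m (omega i * Dmat xi i m) * F (u i) (u m)) *+ 2.
  have -> : \sum_m (2 * Dmat xi i m) * dotv (w (u i)) (Dm (u i) (u m))
      = \sum_m (2 * Dmat xi i m) * F (u i) (u m) - 2 * q (u i) * \sum_m Dmat xi i m.
    rewrite mulr_sumr -sumrB; apply: eq_bigr => m _; rewrite /F /numflux; lra.
  rewrite Drow mulr0 subr0 mulr_sumr -sumrMnl.
  by apply: eq_bigr => m _; rewrite -mulr_natl; lra.
rewrite (eq_bigr _ (fun i _ => volumeE i)) sumrMnl.
rewrite SBP_sum_sym // => [|i m]; first by rewrite !numflux_diag.
exact: numfluxC.
Qed.

End EntropyFlux.

Theorem lemma2 (R : realType) (n N : nat) (U : set 'cV[R]_n)
  (f : 'cV[R]_n -> 'cV[R]_n) (B : 'cV[R]_n -> 'M[R]_n)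
  (S q : 'cV[R]_n -> R) (w : 'cV[R]_n -> 'cV[R]_n)
  (Phi : R -> 'cV[R]_n -> 'cV[R]_n -> 'cV[R]_n)
  (Dm Dp : 'cV[R]_n -> 'cV[R]_n -> 'cV[R]_n)
  (xi omega : 'I_N.+1 -> R) (dx : R)
  (Uk : 'I_N.+1 -> R -> 'cV[R]_n) (Uprev Unext : R -> 'cV[R]_n) (t : R) :
  entropy_pair U f B S q w ->
  path_family U Phi ->
  EC_fluctuations U f B q w Phi Dm Dp ->
  is_LGL xi omega ->
  SBP xi omega ->
  (forall i : 'I_N.+1, \sum_(j < N.+1) Dmat xi i j = 0) ->
  0 < dx ->
  (forall i, U (Uk i t)) -> U (Uprev t) -> U (Unext t) ->
  (forall i, [/\ derivable (Uk i) t 1, derivable (S \o Uk i) t 1 &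
      dotv (w (Uk i t)) (derive1 (Uk i) t) = derive1 (S \o Uk i) t]) ->
  (forall i : 'I_N.+1,
     (omega i * (dx / 2)) *: derive1 (Uk i) t
     + omega i *: (\sum_(m < N.+1) (2 * Dmat xi i m) *: Dm (Uk i t) (Uk m t))
     + (i == ord0)%:R *: Dp (Uprev t) (Uk ord0 t)
     + (i == ord_max)%:R *: Dm (Uk ord_max t) (Unext t) = 0) ->
  [/\ \sum_(i < N.+1) omega i * (dx / 2) * derive1 (S \o Uk i) t
        = numflux q w Dm (Uprev t) (Uk ord0 t)
          - numflux q w Dm (Uk ord_max t) (Unext t),
      (forall uL uR, U uL -> U uR ->
         numflux q w Dm uL uR = q uR - dotv (w uR) (Dp uL uR)) &
      (forall u, U u -> numflux q w Dm u u = q u)].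
Proof.
move=> _ _ [_ [_ [C1 _ C3 C4 _]]] _ SBPxi Drow _ UUk UUprev UUnext dS scheme.
have Dm_diag u : U u -> Dm u u = 0 by case/C1.
set u := fun i => Uk i t.
have entropy_balance : \sum_i
    (omega i * (dx / 2) * derive1 (S \o Uk i) t
    + omega i * \sum_m (2 * Dmat xi i m) * dotv (w (u i)) (Dm (u i) (u m))
    + (i == ord0)%:R * dotv (w (u ord0)) (Dp (Uprev t) (u ord0))
    + (i == ord_max)%:R * dotv (w (u ord_max)) (Dm (u ord_max) (Unext t))) = 0.
  apply: big1 => i _; have := congr1 (dotv (w (u i))) (scheme i).
  rewrite dotv0 !dotvD !dotvZ dotv_sum; case: (dS i) => _ _ <-.
  under eq_bigr do rewrite dotvZ.
  by case: eqP => [->|]; case: eqP => [->|]; rewrite ?mul0r.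
move: entropy_balance; rewrite !big_split /= (flux_differencing_entropy Dm_diag C3 C4) // !sum_delta.
split=> [|uL uR|v]; [|exact: numfluxE|exact: numflux_diag].
rewrite (numfluxE C4) // /numflux; lra.
Qed.
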